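(* Let $\Delta$ be the closed triangle in the Euclidean plane with side lengths $100$, $100$ and $90$. Then there exist $16$ closed rectangles, each of size $20\times 10$, all contained in $\Delta$ and with pairwise disjoint interiors.
   Context: Rectangles may be placed at any position and with any orientation in the plane (they need not be parallel to one another or to any side of the triangle). *)

From Stdlib Require Import Reals.
Open Scope R_scope.

Definition pt := (R * R)%type.

(* The closed triangle with side lengths 100, 100, 90, placed with vertices
   A = (0,0), B = (90,0), C = (45, sqrt 7975)  (|AC| = |BC| = 100, |AB| = 90),
   as the convex hull of its vertices. *)
Definition vA : pt := (0, 0).
Definition vB : pt := (90, 0).
Definition vC : pt := (45, sqrt 7975).

Definition in_triangle (x : pt) : Prop :=
  exists a b c : R, 0 <= a /\ 0 <= b /\ 0 <= c /\ a + b + c = 1 /\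
    fst x = a * fst vA + b * fst vB + c * fst vC /\
    snd x = a * snd vA + b * snd vB + c * snd vC.

Definition in_rect (p : pt) (th : R) (x : pt) : Prop :=
  exists s t : R, 0 <= s <= 20 /\ 0 <= t <= 10 /\
    fst x = fst p + s * cos th - t * sin th /\
    snd x = snd p + s * sin th + t * cos th.

Definition in_rect_interior (p : pt) (th : R) (x : pt) : Prop :=
  exists s t : R, 0 < s < 20 /\ 0 < t < 10 /\
    fst x = fst p + s * cos th - t * sin th /\
    snd x = snd p + s * sin th + t * cos th.

(* All sixteen rectangles are tilted by angles whose cosine and sine are
   rational, namely a/c and b/c for a Pythagorean triple (a, b, c), and have
   rational corners.  The triangle contains the slightly smaller triangle
   obtained by replacing its height sqrt 7975 by the rational 89.302, so
   containment of a rectangle reduces to linear inequalities at its four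
   corners, and the interiors of any two rectangles are separated by a line;
   both facts are then decided by linear arithmetic. *)
From Stdlib Require Import Reals Lra Lia.
Open Scope R_scope.

Lemma cos_sin_atan_pythagorean (a b c : R) :
  0 < a -> 0 < c -> a * a + b * b = c * c ->
  cos (atan (b / a)) = a / c /\ sin (atan (b / a)) = b / c.
Proof.
  intros Ha Hc Hpyth.
  assert (Hsq : 1 + (b / a)² = (c / a)²).
  { unfold Rsqr.
    replace (c / a * (c / a)) with (c * c / (a * a)) by (field; lra).
    rewrite <- Hpyth; field; lra. }
  assert (Hsqrt : sqrt (1 + (b / a)²) = c / a).
  { rewrite Hsq; apply sqrt_Rsqr; apply Rlt_le, Rdiv_lt_0_compat; lra. }
  rewrite cos_atan, sin_atan, Hsqrt; split; field; lra.
Qed.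

Definition rect_pt (p : pt) (ca sa s t : R) : pt :=
  (fst p + s * ca - t * sa, snd p + s * sa + t * ca).

Lemma in_rect_rect_pt (p : pt) (th : R) (x : pt) :
  in_rect p th x ->
  exists s t, 0 <= s <= 20 /\ 0 <= t <= 10 /\ x = rect_pt p (cos th) (sin th) s t.
Proof.
  destruct x as [x1 x2]; intros (s & t & Hs & Ht & E1 & E2).
  exists s, t; unfold rect_pt; simpl in *; subst; auto.
Qed.

Lemma in_rect_interior_rect_pt (p : pt) (th : R) (x : pt) :
  in_rect_interior p th x ->
  exists s t, 0 < s < 20 /\ 0 < t < 10 /\ x = rect_pt p (cos th) (sin th) s t.
Proof.
  destruct x as [x1 x2]; intros (s & t & Hs & Ht & E1 & E2).
  exists s, t; unfold rect_pt; simpl in *; subst; auto.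
Qed.

(* The value at (s, t) is a convex combination of the four corner values. *)
Lemma affine_nonneg_on_box (w h f0 f1 f2 s t : R) : 0 < w -> 0 < h ->
  0 <= f0 -> 0 <= f0 + w * f1 -> 0 <= f0 + h * f2 -> 0 <= f0 + w * f1 + h * f2 ->
  0 <= s <= w -> 0 <= t <= h -> 0 <= f0 + s * f1 + t * f2.
Proof.
  intros Hw Hh H00 H10 H01 H11 Hs Ht.
  replace (f0 + s * f1 + t * f2) with
    ((1 - s / w) * (1 - t / h) * f0 + (s / w) * (1 - t / h) * (f0 + w * f1)
     + (1 - s / w) * (t / h) * (f0 + h * f2)
     + (s / w) * (t / h) * (f0 + w * f1 + h * f2)) by (field; lra).
  assert (0 <= s / w <= 1).
  { split; apply Rmult_le_reg_r with w; try lra; field_simplify; lra. }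
  assert (0 <= t / h <= 1).
  { split; apply Rmult_le_reg_r with h; try lra; field_simplify; lra. }
  set (u := s / w) in *; set (v := t / h) in *; clearbody u v.
  repeat apply Rplus_le_le_0_compat; repeat apply Rmult_le_pos; lra.
Qed.

Definition half_plane (a b c : R) (x : pt) : Prop := 0 <= a * fst x + b * snd x + c.

Lemma rect_pt_in_half_plane (a b c : R) (p : pt) (ca sa s t : R) :
  half_plane a b c (rect_pt p ca sa 0 0) -> half_plane a b c (rect_pt p ca sa 20 0) ->
  half_plane a b c (rect_pt p ca sa 0 10) -> half_plane a b c (rect_pt p ca sa 20 10) ->
  0 <= s <= 20 -> 0 <= t <= 10 -> half_plane a b c (rect_pt p ca sa s t).
Proof.
  unfold half_plane, rect_pt; simpl; intros H00 H10 H01 H11 Hs Ht.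
  assert (0 <= (a * fst p + b * snd p + c) + s * (a * ca + b * sa) + t * (b * ca - a * sa)).
  { apply (affine_nonneg_on_box 20 10); lra. }
  lra.
Qed.

Lemma sqrt_7975_gt : 89302 / 1000 < sqrt 7975.
Proof.
  rewrite <- (sqrt_pow2 (89302 / 1000)) by lra.
  apply sqrt_lt_1_alt; lra.
Qed.

Definition inner_triangle (x : pt) : Prop :=
  half_plane 0 1 0 x /\ half_plane (89302 / 1000) (-45) 0 x /\
  half_plane (- (89302 / 1000)) (-45) (90 * (89302 / 1000)) x.

Lemma inner_triangle_sub (x : pt) : inner_triangle x -> in_triangle x.
Proof.
  destruct x as [x y]; unfold inner_triangle, half_plane; simpl.
  intros (Hy & Hleft & Hright).
  pose proof sqrt_7975_gt as Hh; set (h := sqrt 7975) in *.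
  assert (Hleft' : 45 * y <= h * x) by nra.
  assert (Hright' : 45 * y <= h * (90 - x)) by nra.
  (* barycentric coordinates of (x, y) with respect to vA, vB, vC *)
  exists (1 - (x / 90 - y / (2 * h)) - y / h), (x / 90 - y / (2 * h)), (y / h).
  unfold vA, vB, vC; simpl; fold h.
  repeat split.
  - apply Rmult_le_reg_r with (2 * h * 90); [lra |]; field_simplify; nra.
  - apply Rmult_le_reg_r with (2 * h * 90); [lra |]; field_simplify; nra.
  - apply Rmult_le_reg_r with h; [lra |]; field_simplify; lra.
  - ring.
  - field; lra.
  - field; lra.
Qed.

Lemma rect_pt_in_inner_triangle (p : pt) (ca sa s t : R) :
  inner_triangle (rect_pt p ca sa 0 0) -> inner_triangle (rect_pt p ca sa 20 0) ->
  inner_triangle (rect_pt p ca sa 0 10) -> inner_triangle (rect_pt p ca sa 20 10) ->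
  0 <= s <= 20 -> 0 <= t <= 10 -> inner_triangle (rect_pt p ca sa s t).
Proof.
  intros (A1 & A2 & A3) (B1 & B2 & B3) (C1 & C2 & C3) (D1 & D2 & D3) Hs Ht.
  repeat split; apply rect_pt_in_half_plane; assumption.
Qed.

Definition corner (i : nat) : pt :=
  match i with
  | 0 => (13224023 / 367700, 180109351 / 3677000)
  | 1 => (11963987 / 857000, 10821121 / 428500)
  | 2 => (3938439 / 61000, 857029 / 30500)
  | 3 => (22687111 / 653000, 37379 / 326500)
  | 4 => (103 / 20, 73 / 1000)
  | 5 => (111213 / 4072, 3143199 / 101800)
  | 6 => (104028593 / 2777000, 3734881 / 138850)
  | 7 => (10937809 / 252125, 9392153 / 201700)
  | 8 => (40847977 / 735400, 33844959 / 735400)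
  | 9 => (8103 / 125, 53 / 500)
  | 10 => (5804549 / 147080, 286403431 / 3677000)
  | 11 => (29424387 / 797000, 407189 / 15940)
  | 12 => (35689723 / 793000, 4672529 / 99125)
  | 13 => (8030357 / 857000, 6959479 / 428500)
  | 14 => (10869402 / 264625, 38674 / 264625)
  | 15 => (185965877 / 3461000, 93379867 / 3461000)
  | _ => (0, 0)
  end.

Definition pyth_a (i : nat) : R :=
  match i with
  | 0 => 1652 | 1 => 3996 | 2 => 136 | 3 => 315 | 4 => 1 | 5 => 220
  | 6 => 1095 | 7 => 1855 | 8 => 1652 | 9 => 1 | 10 => 1652 | 11 => 555
  | 12 => 168 | 13 => 3996 | 14 => 2115 | 15 => 1539 | _ => 1
  end.

Definition pyth_b (i : nat) : R :=
  match i with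
  | 0 => 3285 | 1 => -1547 | 2 => -273 | 3 => 572 | 4 => 0 | 5 => 459
  | 6 => 2552 | 7 => 792 | 8 => -3285 | 9 => 0 | 10 => -3285 | 11 => -572
  | 12 => -775 | 13 => -1547 | 14 => 92 | 15 => -3100 | _ => 0
  end.

Definition pyth_c (i : nat) : R :=
  match i with
  | 0 => 3677 | 1 => 4285 | 2 => 305 | 3 => 653 | 4 => 1 | 5 => 509
  | 6 => 2777 | 7 => 2017 | 8 => 3677 | 9 => 1 | 10 => 3677 | 11 => 797
  | 12 => 793 | 13 => 4285 | 14 => 2117 | 15 => 3461 | _ => 1
  end.

Definition angle (i : nat) : R := atan (pyth_b i / pyth_a i).

Definition cos_angle (i : nat) : R := pyth_a i / pyth_c i.
Definition sin_angle (i : nat) : R := pyth_b i / pyth_c i.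

Ltac case_index i tac := do 16 (destruct i as [| i]; [tac |]).

Lemma cos_sin_angle (i : nat) : cos (angle i) = cos_angle i /\ sin (angle i) = sin_angle i.
Proof.
  apply cos_sin_atan_pythagorean;
    case_index i ltac:(unfold pyth_a, pyth_b, pyth_c; lra);
    unfold pyth_a, pyth_b, pyth_c; lra.
Qed.

Lemma corners_in_inner_triangle (i : nat) (s t : R) : (i < 16)%nat ->
  s = 0 \/ s = 20 -> t = 0 \/ t = 10 ->
  inner_triangle (rect_pt (corner i) (cos_angle i) (sin_angle i) s t).
Proof.
  intros Hi Hs Ht.
  unfold inner_triangle, half_plane, rect_pt, cos_angle, sin_angle.
  case_index i ltac:(simpl; unfold pyth_a, pyth_b, pyth_c;
                      destruct Hs, Ht; subst; repeat split; lra).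
  lia.
Qed.

Lemma rect_interiors_disjoint (i j : nat) (s t s' t' : R) :
  (i < 16)%nat -> (j < 16)%nat -> i <> j ->
  0 < s < 20 -> 0 < t < 10 -> 0 < s' < 20 -> 0 < t' < 10 ->
  rect_pt (corner i) (cos_angle i) (sin_angle i) s t <>
  rect_pt (corner j) (cos_angle j) (sin_angle j) s' t'.
Proof.
  intros Hi Hj Hij Hs Ht Hs' Ht' E.
  unfold rect_pt, cos_angle, sin_angle in E; injection E; clear E.
  case_index i ltac:(case_index j ltac:(first [lia | simpl; unfold pyth_a, pyth_b, pyth_c; lra]);
                     lia).
  lia.
Qed.

Theorem mainTheorem2 :
  exists (p : nat -> pt) (th : nat -> R),
    (forall i : nat, (i < 16)%nat ->
       forall x : pt, in_rect (p i) (th i) x -> in_triangle x) /\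
    (forall i j : nat, (i < 16)%nat -> (j < 16)%nat -> i <> j ->
       ~ (exists x : pt, in_rect_interior (p i) (th i) x /\
                         in_rect_interior (p j) (th j) x)).
Proof.
  exists corner, angle; split.
  - intros i Hi x Hx.
    apply inner_triangle_sub.
    destruct (cos_sin_angle i) as [Hcos Hsin].
    destruct (in_rect_rect_pt _ _ _ Hx) as (s & t & Hs & Ht & ->).
    rewrite Hcos, Hsin.
    apply rect_pt_in_inner_triangle; auto using corners_in_inner_triangle.
  - intros i j Hi Hj Hij [x [Hxi Hxj]].
    destruct (cos_sin_angle i) as [Hcos_i Hsin_i].
    destruct (cos_sin_angle j) as [Hcos_j Hsin_j].
    destruct (in_rect_interior_rect_pt _ _ _ Hxi) as (s & t & Hs & Ht & Ei).
    destruct (in_rect_interior_rect_pt _ _ _ Hxj) as (s' & t' & Hs' & Ht' & Ej).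
    rewrite Hcos_i, Hsin_i in Ei; rewrite Hcos_j, Hsin_j in Ej.
    apply (rect_interiors_disjoint i j s t s' t' Hi Hj Hij Hs Ht Hs' Ht').
    now rewrite <- Ei, <- Ej.
Qed.
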